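(* Let $(h_t^\psi,h_t^{\widetilde\psi})$ be two solutions of the conditioned Langevin dynamics (described in the context) on $D$ with boundary data $\psi,\widetilde\psi$ respectively and the same conditioning $a,b$, driven by the same Brownian motions, and let $\overline h=h^\psi-h^{\widetilde\psi}$. There exists $C>0$ depending only on $\mathcal V$ such that for every $T>S$, $\sum_{x\in D}|\overline h_T(x)|^2+\int_S^T\sum_{b\in D^*}|\nabla\overline h_t(b)|^2dt\le C\Big(\sum_{x\in D}|\overline h_S(x)|^2+\int_S^T\sum_{b\in\partial D^*}|\overline\psi(x_b)||\nabla\overline h_t(b)|dt\Big)$.
   Context: $\mathcal{V}\in C^2(\mathbf{R})$ with $\mathcal{V}(x)=\mathcal{V}(-x)$, $0<a_{\mathcal V}\le\mathcal V''\le A_{\mathcal V}<\infty$, $\mathcal V''$ Lipschitz. $D\subseteq\mathbf Z^2$ is bounded, $\partial D$ the set of vertices outside $D$ adjacent to $D$, $D^*$ the edges with at least one endpoint in $D$, $\partial D^*$ the edges joining $D$ to $\partial D$, and for $b\in\partial D^*$, $x_b$ is its endpoint in $\partial D$; $\nabla f(b)=f(y)-f(x)$ for $b=(x,y)$; gradients of $\overline h$ on boundary edges use the extension by $\overline\psi=\psi-\widetilde\psi$ on $\partial D$. $a,b:D\to[-\infty,\infty]$ with $a\le b$. The conditioned Langevin dynamics with boundary data $\psi$ is the solution of $dh_t(x)=\sum_{b\ni x}\mathcal V'(\nabla(h_t\vee\psi)(b))dt+d[\ell_t^a-\ell_t^b](x)+\sqrt2dW_t(x)$, $x\in D$, $t\in\mathbf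 R$, where the edges $b\ni x$ are oriented with initial point $x$, $h\vee\psi$ is $h$ on $D$ and $\psi$ on $\partial D$, $W$ is a family of independent standard two-sided Brownian motions, and $\ell^a(x),\ell^b(x)$ are non-decreasing bounded-variation processes which increase only when $h_t(x)=a(x)$, resp. $h_t(x)=b(x)$ ($\ell^a\equiv0$ if $a(x)=-\infty$, $\ell^b\equiv0$ if $b(x)=\infty$), keeping $a\le h_t\le b$. *)

From HB Require Import structures.
From mathcomp Require Import all_boot all_order all_algebra.
From mathcomp Require Import all_classical all_reals all_analysis.
Set Implicit Arguments. Unset Strict Implicit. Unset Printing Implicit Defensive.
Import Order.TTheory GRing.Theory Num.Theory.
Import numFieldNormedType.Exports.
Local Open Scope classical_set_scope.
Local Open Scope ring_scope.

Definition vtx := (int * int)%type.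

Definition nbrs (z : vtx) : seq vtx :=
  [:: (z.1 + 1, z.2); (z.1 - 1, z.2); (z.1, z.2 + 1); (z.1, z.2 - 1)].

(* lexicographic strict order, used to pick one orientation per edge *)
Definition lexlt (x y : vtx) : bool :=
  (x.1 < y.1) || ((x.1 == y.1) && (x.2 < y.2)).

(* D^* : edges with at least one endpoint in D, each listed exactly once;
   an edge joining D to its complement is oriented from D outwards. *)
Definition Dstar (D : seq vtx) : seq (vtx * vtx) :=
  [seq (x, y) | x <- D, y <- [seq y <- nbrs x | (y \notin D) || lexlt x y]].

(* \partial D^* : edges joining D to \partial D, as (x, x_b) with x in D, x_b in \partial D *)
Definition dDstar (D : seq vtx) : seq (vtx * vtx) :=
  [seq (x, y) | x <- D, y <- [seq y <- nbrs x | y \notin D]].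

Definition grad {R : zmodType} (f : vtx -> R) (e : vtx * vtx) : R := f e.2 - f e.1.

Definition ext {R : Type} (D : seq vtx) (h psi : vtx -> R) (z : vtx) : R :=
  if z \in D then h z else psi z.

Definition der {R : realType} (f : R -> R) : R -> R := (f^`())%classic.

Definition admissible_V {R : realType} (V : R -> R) : Prop :=
  (forall x, derivable V x 1) /\
  (forall x, derivable (der V) x 1) /\
  continuous (der (der V)) /\
  (forall x, V x = V (- x)) /\
  (exists aV AV : R, 0 < aV /\ forall x, aV <= der (der V) x <= AV) /\
  (exists L : R, forall x y, `|der (der V) x - der (der V) y| <= L * `|x - y|).

Definition drift {R : realType} (V : R -> R) (D : seq vtx) (psi : vtx -> R)
  (ht : vtx -> R) (x : vtx) : R :=
  \sum_(y <- nbrs x) der V (ext D ht psi y - ext D ht psi x).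

(* Pathwise notion of a solution of the conditioned Langevin dynamics on D
   with boundary data psi, conditioning a <= h <= b, driving paths W,
   and local-time processes la (at a) and lb (at b). *)
Definition is_solution {R : realType} (V : R -> R) (D : seq vtx)
  (psi : vtx -> R) (a b : vtx -> \bar R) (W : vtx -> R -> R)
  (h : R -> vtx -> R) (la lb : vtx -> R -> R) : Prop :=
  (forall x, x \in D -> continuous (fun t => h t x)) /\
  (forall x t, x \in D -> (a x <= (h t x)%:E)%E /\ ((h t x)%:E <= b x)%E) /\
  (forall x, x \in D -> {homo la x : s t / s <= t}) /\
  (forall x, x \in D -> {homo lb x : s t / s <= t}) /\
  (forall x, x \in D -> a x = -oo%E -> forall t, la x t = 0) /\
  (forall x, x \in D -> b x = +oo%E -> forall t, lb x t = 0) /\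
  (forall x s t, x \in D -> s <= t ->
     (forall u, s <= u <= t -> (a x < (h u x)%:E)%E) -> la x s = la x t) /\
  (forall x s t, x \in D -> s <= t ->
     (forall u, s <= u <= t -> ((h u x)%:E < b x)%E) -> lb x s = lb x t) /\
  (forall x s t, x \in D -> s <= t ->
     h t x - h s x =
       Rintegral lebesgue_measure `[s, t] (fun u => drift V D psi (h u) x)
       + (la x t - la x s) - (lb x t - lb x s)
       + Num.sqrt 2 * (W x t - W x s)).

From HB Require Import structures.
From mathcomp Require Import all_boot all_order all_algebra.
From mathcomp Require Import all_classical all_reals all_analysis.
From mathcomp Require Import ring lra zify.
Import Order.TTheory GRing.Theory Num.Theory.
Import numFieldNormedType.Exports.
Local Open Scope classical_set_scope.
Local Open Scope ring_scope.

(* At a vertex x of D, hbar(x) = h1(x) - h2(x) moves by the difference of the drifts plus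
   two nondecreasing reflection terms: the one pushing hbar(x) up grows only when
   h1(x) = a(x) <= h2(x), i.e. when hbar(x) <= 0, and the one pushing it down only when
   hbar(x) >= 0. So reflection can only decrease hbar(x)^2, and
   hbar_T(x)^2 - hbar_S(x)^2 <= int_S^T 2 hbar(x) (drift difference); this is proved
   pathwise, by continuous induction over [S, T]. Summing over D and summing by parts,
   the mean value theorem for the odd function V' (with aV <= V'' <= AV) bounds the
   drift term by - aV times the Dirichlet energy of hbar plus 2 AV times the boundary
   term in psibar, and the constant follows by elementary algebra. *)

Section Integration.
Context {R : realType}.
Notation mu := (@lebesgue_measure R).

Lemma continuous_integrable_itv (f : R -> R) (s t : R) : continuous f ->
  mu.-integrable `[s, t] (EFin \o f).
Proof.
move=> cf; apply: continuous_compact_integrable; first exact: segment_compact.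
exact: continuous_subspaceT.
Qed.

Lemma Rintegral_itv_split {f : R -> R} {r s t : R} : continuous f ->
  r <= s -> s <= t ->
  Rintegral mu `[r, t] f = Rintegral mu `[r, s] f + Rintegral mu `[s, t] f.
Proof.
move=> cf rs st.
have := @Rintegral_itvB R f (BLeft r) (BRight t) s (continuous_integrable_itv _ r t cf).
rewrite !bnd_simp => /(_ rs st) E.
rewrite -[X in _ + X]Rintegral_itv_obnd_cbnd -?E ?subrKC //.
apply: integrableS (continuous_integrable_itv _ s t cf) => //.
by apply: subset_itvScc; rewrite bnd_simp.
Qed.

Lemma Rintegral_cst_itv (s t c : R) : s <= t ->
  Rintegral mu `[s, t] (fun=> c) = c * (t - s).
Proof.
move=> st; rewrite Rintegral_cst //= lebesgue_measure_itv /= lte_fin.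
by case: ltgtP st => // -> _; rewrite subrr mulr0.
Qed.

Lemma Rintegral_le_cst_itv (f : R -> R) (s t c : R) : continuous f -> s <= t ->
  (forall u, s <= u <= t -> f u <= c) -> Rintegral mu `[s, t] f <= c * (t - s).
Proof.
move=> cf st fc; rewrite -Rintegral_cst_itv //; apply: le_Rintegral => //.
- exact: continuous_integrable_itv.
- by apply: continuous_integrable_itv; exact: cst_continuous.
Qed.

Lemma continuous_sum (I : Type) (s : seq I) (f : I -> R -> R) :
  (forall i, continuous (f i)) -> continuous (fun u => \sum_(i <- s) f i u).
Proof.
move=> cf; elim: s => [|i s IHs].
  by under eq_fun do rewrite big_nil; exact: cst_continuous.
by under eq_fun do rewrite big_cons; move=> u; apply: cvgD; [exact: cf|exact: IHs].
Qed.

Lemma Rintegral_sum (I : Type) (s : seq I) (f : I -> R -> R) (S T : R) :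
  S <= T -> (forall i, continuous (f i)) ->
  Rintegral mu `[S, T] (fun u => \sum_(i <- s) f i u) =
  \sum_(i <- s) Rintegral mu `[S, T] (f i).
Proof.
move=> ST cf; elim: s => [|i s IHs].
  by under eq_Rintegral do rewrite big_nil; rewrite big_nil Rintegral_cst_itv // mul0r.
under eq_Rintegral do rewrite big_cons.
rewrite big_cons RintegralD ?IHs //; apply: continuous_integrable_itv => //.
exact: continuous_sum.
Qed.

End Integration.

Lemma le_of_locally_nonincreasing {R : realType} (E : R -> R) (S T : R) : S <= T ->
  (forall t0, S <= t0 <= T -> exists2 d : R, 0 < d &
     forall s t, S <= s -> s <= t -> t <= T -> t0 - d < s -> t < t0 + d -> E t <= E s) ->
  E T <= E S.
Proof.
move=> ST loc.
pose A := [set t | S <= t <= T /\ E t <= E S].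
have supA : has_sup A.
  split; first by exists S; rewrite /A /= lexx ST.
  by exists T => t [/andP[_ ->]].
set c := sup A.
have Sc : S <= c by apply: (sup_upper_bound supA); rewrite /A /= lexx ST.
have cT : c <= T by apply: ge_sup; [case: supA|move=> t [/andP[_ ->]]].
have [d d0 Ed] := loc c (introT andP (conj Sc cT)).
have [s As cs] := sup_adherent d0 supA.
have sc : s <= c by apply: (sup_upper_bound supA).
case: As => /andP[Ss sT] Es.
have [cT'|Tc] := ltP c T; last first.
  suff -> : T = c by apply: le_trans Es; apply: Ed => //; rewrite ltrDl.
  by apply/eqP; rewrite eq_le cT Tc.
(* if c < T, local monotonicity at c puts points beyond c into A *)
pose t := Num.min (c + d / 2) T.
have ct : c < t by rewrite /t lt_min cT' ltrDl divr_gt0.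
suff /(sup_upper_bound supA) : A t by rewrite -/c => /(lt_le_trans ct); rewrite ltxx.
split; first by rewrite (le_trans Sc (ltW ct)) /t ge_min lexx orbT.
apply: le_trans Es; apply: Ed => //.
- exact: le_trans sc (ltW ct).
- by rewrite /t ge_min lexx orbT.
- by rewrite /t gt_min ltrD2l ltr_pdivrMr // ltr_pMr // ltr1n.
Qed.

Lemma continuous_near {R : realType} (g : R -> R) (t0 e : R) : continuous g -> 0 < e ->
  exists2 d : R, 0 < d & forall u, `|t0 - u| < d -> `|g t0 - g u| < e.
Proof.
move=> cg e0.
have [d d0 Ed] := iffLR (nbhs_ballP _ _) (@cvgr_dist_lt _ _ _ _ _ g _ (cg t0) _ e0).
by exists d.
Qed.

Lemma increment_mul_le_of_nonpos {R : realFieldType} {g P : R -> R} {s t c eta : R} :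
  s <= t -> P s <= P t -> (P s < P t -> exists2 u, s <= u <= t & g u <= 0) ->
  (forall u, s <= u <= t -> `|c - g u| < eta) ->
  (g t + g s) * (P t - P s) <= 4 * eta * (P t - P s).
Proof.
move=> st; rewrite le_eqVlt => /orP[/eqP->|Pst Pinc near]; first by rewrite subrr !mulr0.
apply: ler_wpM2r; first by rewrite subr_ge0 ltW.
have [u su gu] := Pinc Pst.
have /ltr_normlP[? ?] := near u su.
have /ltr_normlP[? ?] := near t (introT andP (conj st (lexx t))).
have /ltr_normlP[? ?] := near s (introT andP (conj (lexx s) st)).
lra.
Qed.

Lemma le0_of_le_mul_small {R : realFieldType} {x K : R} : 0 <= K ->
  (forall e, 0 < e -> x <= e * K) -> x <= 0.
Proof.
move=> K0 small; apply/ler_addgt0Pr => z z0; rewrite add0r.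
apply: le_trans (small _ (divr_gt0 z0 (ltr_wpDl K0 ltr01))) _.
by rewrite mulrAC ler_pdivrMr ?ltr_wpDl // ler_pM2l // lerDl.
Qed.

Section ReflectedEnergy.
Context {R : realType}.
Notation mu := (@lebesgue_measure R).
Variables (g F P N : R -> R).
Hypotheses (cg : continuous g) (cF : continuous F)
  (P_homo : {homo P : s t / s <= t}) (N_homo : {homo N : s t / s <= t})
  (g_eq : forall s t, s <= t ->
     g t - g s = Rintegral mu `[s, t] F + (P t - P s) - (N t - N s))
  (P_incr : forall s t, s <= t -> P s < P t -> exists2 u, s <= u <= t & g u <= 0)
  (N_incr : forall s t, s <= t -> N s < N t -> exists2 u, s <= u <= t & 0 <= g u).

Let G u := 2 * g u * F u.

Let continuous_G : continuous G.
Proof. by move=> u; apply: cvgM; [apply: cvgM; [exact: cvg_cst|exact: cg]|exact: cF]. Qed.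

Lemma reflected_sq_increment_local (t0 e : R) : 0 < e -> exists2 d : R, 0 < d &
  forall s t, s <= t -> t0 - d < s -> t < t0 + d ->
  g t ^+ 2 - g s ^+ 2 - Rintegral mu `[s, t] G <=
  e * ((t - s) + (P t - P s) + (N t - N s)).
Proof.
move=> e0; pose K := `|F t0| + 1; pose eta := e / (4 * K).
have K1 : 1 <= K by rewrite /K lerDr.
have eta0 : 0 < eta by rewrite divr_gt0 // mulr_gt0 //; lra.
have eta4K : 4 * eta * K = e by rewrite /eta; field; lra.
have [d1 d10 Ed1] := @continuous_near _ g t0 eta cg eta0.
have [d2 d20 Ed2] := @continuous_near _ F t0 1 cF ltr01.
exists (Num.min d1 d2); first by rewrite lt_min d10 d20.
move=> s t st ts tt.
have near u : s <= u <= t -> `|g t0 - g u| < eta /\ `|F u| <= K.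
  move=> /andP[su ut]; have : `|t0 - u| < Num.min d1 d2.
    by rewrite ltr_norml; apply/andP; split; lra.
  rewrite lt_min => /andP[/Ed1 gu /Ed2 Fu]; split=> //.
  by have := lerB_dist (F u) (F t0); rewrite distrC /K; lra.
have near_g u : s <= u <= t -> `|g t0 - g u| < eta by move=> /near[].
have [gt _] := near t (introT andP (conj st (lexx t))).
have [gs _] := near s (introT andP (conj (lexx s) st)).
set X := g t + g s.
have intF : X * Rintegral mu `[s, t] F - Rintegral mu `[s, t] G <= e * (t - s).
  have cXF : continuous (fun u => X * F u - G u).
    by move=> u; apply: cvgB; [apply: cvgM; [exact: cvg_cst|exact: cF]|exact: continuous_G].
  rewrite -RintegralZl ?continuous_integrable_itv // -RintegralB
    ?continuous_integrable_itv //; last by move=> u; apply: cvgM; [exact: cvg_cst|exact: cF].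
  apply: Rintegral_le_cst_itv => // u /near[gu Fu].
  have -> : X * F u - G u = ((g t - g u) + (g s - g u)) * F u by rewrite /X /G; ring.
  apply: le_trans (ler_norm _) _; rewrite normrM -eta4K; apply: ler_pM => //.
  move: gt gs gu => /ltr_normlP[? ?] /ltr_normlP[? ?] /ltr_normlP[? ?].
  by rewrite ler_norml; apply/andP; split; lra.
have reflP := increment_mul_le_of_nonpos st (P_homo _ _ st) (P_incr _ _ st) near_g.
have reflN := @increment_mul_le_of_nonpos _ (fun u => - g u) N s t (- g t0) eta st
  (N_homo _ _ st).
have {}reflN : - X * (N t - N s) <= 4 * eta * (N t - N s).
  rewrite /X opprD; apply: reflN => [/(N_incr _ _ st)[u su gu]|u /near_g].
    by exists u; rewrite // oppr_le0.
  by rewrite -opprD normrN.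
have eta_e (c : R) : 0 <= c -> 4 * eta * c <= e * c.
  by move=> c0; apply: ler_wpM2r => //; rewrite -eta4K ler_peMr //; lra.
have := eta_e (P t - P s); have := eta_e (N t - N s).
rewrite !subr_ge0 P_homo ?N_homo // => /(_ isT) etaN /(_ isT) etaP.
have -> : g t ^+ 2 - g s ^+ 2 = X * (g t - g s) by rewrite /X; ring.
rewrite -/X in reflP; rewrite mulNr in reflN.
rewrite g_eq // mulrBr mulrDr (mulrDr e) (mulrDr e); lra.
Qed.

Lemma reflected_sq_increment (S T : R) : S <= T ->
  g T ^+ 2 - g S ^+ 2 <= Rintegral mu `[S, T] G.
Proof.
move=> ST; rewrite -subr_le0.
have ST_incr : 0 <= (T - S) + (P T - P S) + (N T - N S).
  by have := P_homo _ _ ST; have := N_homo _ _ ST; lra.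
apply: (le0_of_le_mul_small ST_incr) => e e0.
pose E t := g t ^+ 2 - Rintegral mu `[S, t] G - e * (t + P t + N t).
suff : E T <= E S.
  rewrite /E; clear E.
  by have := Rintegral_itv_split continuous_G (lexx S) (lexx S); lra.
apply: le_of_locally_nonincreasing => // t0 _.
have [d d0 Ed] := reflected_sq_increment_local t0 e e0.
exists d => // s t Ss st _ ts tt.
rewrite /E (Rintegral_itv_split continuous_G Ss st); clear E.
by have := Ed s t st ts tt; lra.
Qed.

End ReflectedEnergy.

Section Potential.
Context {R : realType} {V : R -> R}.

Lemma continuous_der : (forall x, derivable (der V) x 1) -> continuous (der V).
Proof.
by move=> dV' x; apply/differentiable_continuous; rewrite -derivable1_diffP.
Qed.

Lemma der_odd_of_even : (forall x, derivable V x 1) -> (forall x, V x = V (- x)) ->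
  forall x, der V (- x) = - der V x.
Proof.
move=> dV evenV x.
have VN : V = V \o -%R by apply/funext => y /=; rewrite -evenV.
have dN : derivable (-%R : R -> R) x 1 by apply: derivableN; exact: derivable_id.
have -> : der V x = der (V \o -%R) x by rewrite -VN.
rewrite /der (derive1_comp dN (dV _)) derive1E.
have -> : (-%R : R -> R)^`()%classic x = -1.
  rewrite derive1E; change ('D_1 (- (@id R)) x = -1).
  by rewrite deriveN ?derive_id //; exact: derivable_id.
by rewrite mulrN1 opprK.
Qed.

Lemma der_mvt_bounded {aV AV : R} : (forall x, derivable (der V) x 1) ->
  (forall x, aV <= der (der V) x <= AV) ->
  forall p q, exists2 c, aV <= c <= AV & der V p - der V q = c * (p - q).
Proof.
move=> dV' bnd p q; wlog qp : p q / q <= p.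
  move=> W; have [|/ltW pq] := leP q p; first exact: W.
  by have [c cb E] := W q p pq; exists c; rewrite // -opprB E -mulrN opprB.
have [c _ E] := @MVT_segment R (der V) (der (der V)) q p qp
  (fun x _ => is_derive_eq (derivableP (dV' x)) (esym (derive1E (der V) x)))
  (continuous_subspaceT (continuous_der dV')).
by exists (der (der V) c).
Qed.

End Potential.

Lemma nbrs_uniq (z : vtx) : uniq (nbrs z).
Proof.
case: z => a b; rewrite /nbrs /= !inE !xpair_eqE /=.
by apply/and4P; split=> //; apply/negP; lia.
Qed.

Lemma mem_nbrsC (x y : vtx) : (y \in nbrs x) = (x \in nbrs y).
Proof.
case: x => a b; case: y => c d; rewrite /nbrs !inE !xpair_eqE /=.
by apply/idP/idP; lia.
Qed.

Section LatticeSums.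
Context {R : nmodType}.

Lemma big_mem_filterC {T : eqType} {s1 s2 : seq T} (F : T -> R) :
  uniq s1 -> uniq s2 ->
  \sum_(y <- s1 | y \in s2) F y = \sum_(y <- s2 | y \in s1) F y.
Proof.
move=> u1 u2; rewrite -big_filter -[RHS]big_filter; apply: perm_big.
by apply: uniq_perm; rewrite ?filter_uniq // => y; rewrite !mem_filter andbC.
Qed.

Lemma sum_inner_nbrs_swap (D : seq vtx) (F : vtx -> vtx -> R) : uniq D ->
  \sum_(x <- D) \sum_(y <- nbrs x | y \in D) F x y =
  \sum_(x <- D) \sum_(y <- nbrs x | y \in D) F y x.
Proof.
move=> uD.
have E (G : vtx -> vtx -> R) : \sum_(x <- D) \sum_(y <- nbrs x | y \in D) G x y =
           \sum_(x <- D) \sum_(y <- D) (if y \in nbrs x then G x y else 0).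
  by apply: eq_bigr => x _; rewrite (big_mem_filterC (G x)) ?nbrs_uniq // big_mkcond.
rewrite !E exchange_big /=; apply: eq_bigr => x _; apply: eq_bigr => y _.
by rewrite mem_nbrsC.
Qed.

End LatticeSums.

(* Discrete Green formula: each interior edge is counted twice, once from each endpoint. *)
Lemma sum_mul_nbrs_by_parts {R : numFieldType} (D : seq vtx) (g : vtx -> R)
  (J : vtx -> vtx -> R) : uniq D -> (forall x y, J y x = - J x y) ->
  \sum_(x <- D) g x * \sum_(y <- nbrs x) J x y =
  \sum_(x <- D) \sum_(y <- nbrs x)
     (if y \in D then - ((g y - g x) * J x y) / 2 else g x * J x y).
Proof.
move=> uD J_anti.
have swap : \sum_(x <- D) \sum_(y <- nbrs x | y \in D) g y * J x y =
            - \sum_(x <- D) \sum_(y <- nbrs x | y \in D) g x * J x y.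
  rewrite sum_inner_nbrs_swap // -sumrN; apply: eq_bigr => x _; rewrite -sumrN.
  by apply: eq_bigr => y _; rewrite J_anti mulrN.
have split_in (f1 f2 : vtx -> vtx -> R) :
  \sum_(x <- D) \sum_(y <- nbrs x) (if y \in D then f1 x y else f2 x y) =
  \sum_(x <- D) \sum_(y <- nbrs x | y \in D) f1 x y +
  \sum_(x <- D) \sum_(y <- nbrs x | y \notin D) f2 x y.
  rewrite -big_split; apply: eq_bigr => x _; rewrite (bigID (fun y => y \in D)) /=.
  by congr (_ + _); apply: eq_bigr => y; [move->|move/negbTE->].
have -> : \sum_(x <- D) g x * \sum_(y <- nbrs x) J x y =
          \sum_(x <- D) \sum_(y <- nbrs x) (if y \in D then g x * J x y else g x * J x y).
  by apply: eq_bigr => x _; rewrite big_distrr; apply: eq_bigr => y _; case: ifP.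
rewrite !split_in; congr (_ + _).
transitivity ((- (\sum_(x <- D) \sum_(y <- nbrs x | y \in D) g y * J x y) +
   \sum_(x <- D) \sum_(y <- nbrs x | y \in D) g x * J x y) / 2); last first.
  rewrite -sumrN -big_split big_distrl /=; apply: eq_bigr => x _.
  rewrite -sumrN -big_split big_distrl /=; apply: eq_bigr => y _; ring.
by rewrite swap opprK; field.
Qed.

Section Dissipation.
Context {R : realFieldType}.

Lemma interior_edge_le (aV c d : R) : aV <= c ->
  - (d * (c * d)) / 2 <= - (aV / 2) * d ^+ 2.
Proof.
move=> ac; have := ler_wpM2r (sqr_ge0 d) ac.
have -> : - (d * (c * d)) / 2 = - (c * d ^+ 2) / 2 by ring.
lra.
Qed.

Lemma boundary_edge_le (aV AV c gx gy : R) : 0 <= aV -> aV <= c -> c <= AV ->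
  gx * (c * (gy - gx)) <= - (aV / 2) * (gy - gx) ^+ 2 + AV * (`|gy| * `|gy - gx|).
Proof.
move=> aV0 ac cA; set d := gy - gx.
have -> : gx * (c * d) = c * d * gy - c * d ^+ 2 by rewrite /d; ring.
have c0 : 0 <= c := le_trans aV0 ac.
have : c * d * gy <= AV * (`|gy| * `|d|).
  apply: le_trans (ler_norm _) _; rewrite !normrM (ger0_norm c0) -mulrA [`|d| * _]mulrC.
  by apply: ler_wpM2r => //; rewrite mulr_ge0.
have := ler_wpM2r (sqr_ge0 d) ac.
have := mulr_ge0 aV0 (sqr_ge0 d).
lra.
Qed.

Lemma drift_dissipation {V' : R -> R} {aV AV : R} (aV0 : 0 <= aV)
  (V'_mvt : forall p q, exists2 c, aV <= c <= AV & V' p - V' q = c * (p - q))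
  (V'_odd : forall x, V' (- x) = - V' x)
  {D : seq vtx} (uD : uniq D) (e1 e2 : vtx -> R) {psibar : vtx -> R}
  (e12_bd : forall z, z \notin D -> e1 z - e2 z = psibar z) :
  \sum_(x <- D) 2 * (e1 x - e2 x) *
     (\sum_(y <- nbrs x) V' (e1 y - e1 x) - \sum_(y <- nbrs x) V' (e2 y - e2 x))
  <= - aV * \sum_(e <- Dstar D) (grad (fun z => e1 z - e2 z) e) ^+ 2
     + 2 * AV * \sum_(e <- dDstar D) `|psibar e.2| * `|grad (fun z => e1 z - e2 z) e|.
Proof.
set gg := fun z => e1 z - e2 z.
pose J x y := V' (e1 y - e1 x) - V' (e2 y - e2 x).
have J_anti x y : J y x = - J x y.
  by rewrite /J -(opprB (e1 y)) -(opprB (e2 y)) !V'_odd; ring.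
have -> : \sum_(x <- D) 2 * (e1 x - e2 x) *
     (\sum_(y <- nbrs x) V' (e1 y - e1 x) - \sum_(y <- nbrs x) V' (e2 y - e2 x))
   = 2 * \sum_(x <- D) gg x * \sum_(y <- nbrs x) J x y.
  by rewrite mulr_sumr; apply: eq_bigr => x _; rewrite -sumrB /gg; ring.
rewrite sum_mul_nbrs_by_parts //.
pose bnd x y := - (aV / 2) * (gg y - gg x) ^+ 2 +
   AV * (if y \in D then 0 else `|psibar y| * `|gg y - gg x|).
have edge_le x y :
    (if y \in D then - ((gg y - gg x) * J x y) / 2 else gg x * J x y) <= bnd x y.
  have [c /andP[ac cA] Ec] := V'_mvt (e1 y - e1 x) (e2 y - e2 x).
  have -> : J x y = c * (gg y - gg x) by rewrite /J Ec /gg; congr (_ * _); ring.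
  rewrite /bnd; case: ifP => yD; first by rewrite mulr0 addr0; exact: interior_edge_le.
  by rewrite -(e12_bd y) ?yD //; exact: boundary_edge_le.
have sum_bnd : \sum_(x <- D) \sum_(y <- nbrs x) bnd x y =
   - (aV / 2) * \sum_(x <- D) \sum_(y <- nbrs x) (gg y - gg x) ^+ 2 +
   AV * \sum_(e <- dDstar D) `|psibar e.2| * `|grad gg e|.
  rewrite /dDstar big_allpairs_dep !mulr_sumr -big_split.
  apply: eq_bigr => x _; rewrite big_filter big_mkcond /= !mulr_sumr -big_split.
  by apply: eq_bigr => y _; rewrite /bnd /grad /=; case: ifP.
(* D^* lists each edge once, the double sum counts interior edges twice *)
have Dstar_le : \sum_(e <- Dstar D) (grad gg e) ^+ 2 <=
   \sum_(x <- D) \sum_(y <- nbrs x) (gg y - gg x) ^+ 2.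
  rewrite /Dstar big_allpairs_dep; apply: ler_sum => x _.
  rewrite big_filter big_mkcond; apply: ler_sum => y _.
  by case: ifP => _ //; exact: sqr_ge0.
have sum_le : \sum_(x <- D) \sum_(y <- nbrs x)
     (if y \in D then - ((gg y - gg x) * J x y) / 2 else gg x * J x y)
   <= \sum_(x <- D) \sum_(y <- nbrs x) bnd x y.
  by apply: ler_sum => x _; apply: ler_sum => y _; exact: edge_le.
rewrite sum_bnd in sum_le; have := ler_wpM2l aV0 Dstar_le; lra.
Qed.

End Dissipation.

Lemma increase_witness {R : realDomainType} {l1 l2 : R -> R} {p1 p2 : R -> bool} {s t : R} :
  ((forall u, s <= u <= t -> p1 u) -> l1 s = l1 t) ->
  ((forall u, s <= u <= t -> p2 u) -> l2 s = l2 t) ->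
  l1 s + l2 s < l1 t + l2 t -> exists2 u, s <= u <= t & ~~ p1 u || ~~ p2 u.
Proof.
move=> l1_cst l2_cst; case: (pselect (exists2 u, s <= u <= t & ~~ p1 u || ~~ p2 u)) => // nex.
have p12 u : s <= u <= t -> p1 u && p2 u.
  by move=> su; apply/negPn; rewrite negb_and; apply/negP => npu; apply: nex; exists u.
by rewrite l1_cst ?l2_cst ?ltxx // => u /p12 /andP[].
Qed.

Lemma lee_of_not_both_inside {R : realDomainType} (a b x y : \bar R) :
  (a <= y)%E -> (x <= b)%E -> ~~ (a < x)%E || ~~ (y < b)%E -> (x <= y)%E.
Proof.
move=> ay xb /orP[]; rewrite -leNgt => h.
- exact: le_trans h ay.
- exact: le_trans xb h.
Qed.

Section Solutions.
Context {R : realType}.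
Notation mu := (@lebesgue_measure R).

Lemma continuous_ext (D : seq vtx) (h : R -> vtx -> R) (psi : vtx -> R) :
  (forall x, x \in D -> continuous (fun t => h t x)) ->
  forall z, continuous (fun t => ext D (h t) psi z).
Proof.
move=> ch z; rewrite /ext; case: (boolP (z \in D)) => zD; first exact: ch.
exact: cst_continuous.
Qed.

Lemma continuous_drift {V : R -> R} {D : seq vtx} (psi : vtx -> R) {h : R -> vtx -> R} x :
  continuous (der V) -> (forall x, x \in D -> continuous (fun t => h t x)) ->
  continuous (fun t => drift V D psi (h t) x).
Proof.
move=> cV' ch; apply: continuous_sum => y u.
apply: (@continuous_comp _ _ _ (fun t => ext D (h t) psi y - ext D (h t) psi x) (der V)).
  by apply: cvgB; apply: continuous_ext.
exact: cV'.
Qed.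

Context {V : R -> R} {D : seq vtx} {psi psi' : vtx -> R} {a b : vtx -> \bar R}
  {W : vtx -> R -> R} {h1 h2 : R -> vtx -> R} {la1 lb1 la2 lb2 : vtx -> R -> R}.
Hypotheses (cV' : continuous (der V))
  (sol1 : is_solution V D psi a b W h1 la1 lb1)
  (sol2 : is_solution V D psi' a b W h2 la2 lb2).

Lemma solution_diff_sq_increment x S T : x \in D -> S <= T ->
  (h1 T x - h2 T x) ^+ 2 - (h1 S x - h2 S x) ^+ 2 <=
  Rintegral mu `[S, T] (fun u => 2 * (h1 u x - h2 u x) *
     (drift V D psi (h1 u) x - drift V D psi' (h2 u) x)).
Proof.
move=> xD ST.
move: sol1 => [c1 [bd1 [ma1 [mb1 [_ [_ [ia1 [ib1 eq1]]]]]]]].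
move: sol2 => [c2 [bd2 [ma2 [mb2 [_ [_ [ia2 [ib2 eq2]]]]]]]].
have cdrift1 := continuous_drift psi x cV' c1.
have cdrift2 := continuous_drift psi' x cV' c2.
(* la1 and lb2 push h1 - h2 up, lb1 and la2 push it down *)
apply: (@reflected_sq_increment R (fun u => h1 u x - h2 u x)
  (fun u => drift V D psi (h1 u) x - drift V D psi' (h2 u) x)
  (fun t => la1 x t + lb2 x t) (fun t => lb1 x t + la2 x t)) => //.
- by move=> u; apply: cvgB; [exact: c1|exact: c2].
- by move=> u; apply: cvgB; [exact: cdrift1|exact: cdrift2].
- by move=> s t st; apply: lerD; [exact: ma1|exact: mb2].
- by move=> s t st; apply: lerD; [exact: mb1|exact: ma2].
- move=> s t st; rewrite RintegralB ?continuous_integrable_itv //.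
  by have := eq1 x s t xD st; have := eq2 x s t xD st; lra.
- move=> s t st /(increase_witness (ia1 x s t xD st) (ib2 x s t xD st))[u su nu].
  exists u => //; rewrite subr_le0 -lee_fin.
  exact: lee_of_not_both_inside (bd2 x u xD).1 (bd1 x u xD).2 nu.
- move=> s t st /(increase_witness (ib1 x s t xD st) (ia2 x s t xD st))[u su nu].
  exists u => //; rewrite subr_ge0 -lee_fin.
  by apply: lee_of_not_both_inside (bd1 x u xD).1 (bd2 x u xD).2 _; rewrite orbC.
Qed.

Let hbar t z := ext D (h1 t) psi z - ext D (h2 t) psi' z.
Let psibar z := psi z - psi' z.

Let continuous_hbar z : continuous (fun t => hbar t z).
Proof. by move=> u; apply: cvgB; apply: continuous_ext; [case: sol1|case: sol2]. Qed.

Let continuous_drift_diff x :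
  continuous (fun u => drift V D psi (h1 u) x - drift V D psi' (h2 u) x).
Proof. by move=> u; apply: cvgB; apply: continuous_drift => //; [case: sol1|case: sol2]. Qed.

Lemma solution_energy_sum {S T : R} : S <= T ->
  \sum_(x <- D) hbar T x ^+ 2 - \sum_(x <- D) hbar S x ^+ 2 <=
  Rintegral mu `[S, T] (fun u => \sum_(x <- D) 2 * hbar u x *
     (drift V D psi (h1 u) x - drift V D psi' (h2 u) x)).
Proof.
move=> ST; rewrite Rintegral_sum //; last first.
  move=> x u; apply: cvgM; last exact: continuous_drift_diff.
  by apply: cvgM; [exact: cvg_cst|exact: continuous_hbar].
rewrite -sumrB big_seq [leRHS]big_seq; apply: ler_sum => x xD.
have hbar_in u : hbar u x = h1 u x - h2 u x by rewrite /hbar /ext xD.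
under eq_Rintegral do rewrite hbar_in.
by rewrite !hbar_in; exact: solution_diff_sq_increment.
Qed.

Lemma solution_dissipation {aV AV S T : R} : 0 <= aV ->
  (forall p q, exists2 c, aV <= c <= AV & der V p - der V q = c * (p - q)) ->
  (forall x, der V (- x) = - der V x) -> uniq D -> S <= T ->
  \sum_(x <- D) hbar T x ^+ 2
    + aV * Rintegral mu `[S, T] (fun t => \sum_(e <- Dstar D) (grad (hbar t) e) ^+ 2)
  <= \sum_(x <- D) hbar S x ^+ 2
    + 2 * AV * Rintegral mu `[S, T]
        (fun t => \sum_(e <- dDstar D) `|psibar e.2| * `|grad (hbar t) e|).
Proof.
move=> aV0 V'_mvt V'_odd uD ST.
have continuous_grad e : continuous (fun t => grad (hbar t) e).
  by move=> u; apply: cvgB; exact: continuous_hbar.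
set G := fun t => \sum_(e <- Dstar D) (grad (hbar t) e) ^+ 2.
set B := fun t => \sum_(e <- dDstar D) `|psibar e.2| * `|grad (hbar t) e|.
have cG : continuous G.
  apply: continuous_sum => e u.
  apply: (@continuous_comp _ _ _ (fun t => grad (hbar t) e) (fun x : R => x ^+ 2)).
    exact: continuous_grad.
  exact: exprn_continuous.
have cB : continuous B.
  apply: continuous_sum => e u; apply: cvgM; first exact: cvg_cst.
  apply: (@continuous_comp _ _ _ (fun t => grad (hbar t) e) Num.norm).
    exact: continuous_grad.
  exact: norm_continuous.
have cZ (c : R) (f : R -> R) : continuous f -> continuous (fun t => c * f t).
  by move=> cf u; apply: cvgM; [exact: cvg_cst|exact: cf].
suff : Rintegral mu `[S, T] (fun u => \sum_(x <- D) 2 * hbar u x *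
     (drift V D psi (h1 u) x - drift V D psi' (h2 u) x))
   <= - aV * Rintegral mu `[S, T] G + 2 * AV * Rintegral mu `[S, T] B.
  by have := solution_energy_sum ST; lra.
have cZG := cZ (- aV) G cG; have cZB := cZ (2 * AV) B cB.
rewrite -!RintegralZl ?continuous_integrable_itv // -RintegralD
  ?continuous_integrable_itv //.
apply: le_Rintegral => //.
- apply/continuous_integrable_itv/continuous_sum => x u.
  apply: cvgM; last exact: continuous_drift_diff.
  exact: (cZ 2 (fun t => hbar t x) (continuous_hbar x)).
- by apply: continuous_integrable_itv => u; apply: cvgD; [exact: cZG|exact: cZB].
- move=> u _; apply: (drift_dissipation aV0 V'_mvt V'_odd uD
    (ext D (h1 u) psi) (ext D (h2 u) psi')) => z zD.
  by rewrite /ext (negbTE zD).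
Qed.

End Solutions.

Lemma le_mul_of_dissipation {R : realFieldType} (aV AV P0 P1 IG IB : R) :
  0 < aV -> 0 <= AV -> 0 <= P0 -> 0 <= P1 -> 0 <= IG -> 0 <= IB ->
  P1 + aV * IG <= P0 + 2 * AV * IB ->
  P1 + IG <= (1 + aV^-1) * (1 + 2 * AV) * (P0 + IB).
Proof.
move=> aV0 AV0 P00 P10 IG0 IB0 diss.
have aVi0 : 0 < aV^-1 by rewrite invr_gt0.
have lhs_le : P1 + IG <= (1 + aV^-1) * (P1 + aV * IG).
  have -> : (1 + aV^-1) * (P1 + aV * IG) = P1 + aV^-1 * P1 + (aV + 1) * IG.
    by field; rewrite gt_eqF.
  have := mulr_ge0 (ltW aVi0) P10; have := mulr_ge0 (ltW aV0) IG0; lra.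
have rhs_le : P0 + 2 * AV * IB <= (1 + 2 * AV) * (P0 + IB).
  by have := mulr_ge0 AV0 P00; have := mulr_ge0 AV0 IB0; lra.
rewrite -mulrA; apply: (le_trans lhs_le); apply: ler_wpM2l; first lra.
exact: le_trans diss rhs_le.
Qed.

Theorem lemma3p3 (R : realType) (V : R -> R) (HV : admissible_V V) :
  exists C : R, 0 < C /\
  forall (D : seq vtx) (psi psi' : vtx -> R) (a b : vtx -> \bar R)
    (W : vtx -> R -> R) (h1 h2 : R -> vtx -> R) (la1 lb1 la2 lb2 : vtx -> R -> R),
    uniq D ->
    (forall x, x \in D -> (a x <= b x)%E) ->
    is_solution V D psi a b W h1 la1 lb1 ->
    is_solution V D psi' a b W h2 la2 lb2 ->
    let hbar := fun t z => ext D (h1 t) psi z - ext D (h2 t) psi' z in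
    let psibar := fun z => psi z - psi' z in
    forall S T : R, S < T ->
      \sum_(x <- D) (hbar T x) ^+ 2
      + Rintegral lebesgue_measure `[S, T]
          (fun t => \sum_(e <- Dstar D) (grad (hbar t) e) ^+ 2)
      <= C * (\sum_(x <- D) (hbar S x) ^+ 2
              + Rintegral lebesgue_measure `[S, T]
                  (fun t => \sum_(e <- dDstar D) `|psibar e.2| * `|grad (hbar t) e|)).
Proof.
have [dV [dV' [_ [evenV [[aV [AV [aV0 V''_bnd]]] _]]]]] := HV.
have AV0 : 0 <= AV.
  by have /andP[aV_le le_AV] := V''_bnd 0; exact: le_trans (ltW aV0) (le_trans aV_le le_AV).
have aVi0 : 0 < aV^-1 by rewrite invr_gt0.
exists ((1 + aV^-1) * (1 + 2 * AV)); split; first by apply: mulr_gt0; lra.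
move=> D psi psi' a b W h1 h2 la1 lb1 la2 lb2 uD _ sol1 sol2 hbar psibar S T ST.
apply: le_mul_of_dissipation => //.
- by apply: sumr_ge0 => x _; exact: sqr_ge0.
- by apply: sumr_ge0 => x _; exact: sqr_ge0.
- by apply: Rintegral_ge0 => t _; apply: sumr_ge0 => e _; exact: sqr_ge0.
- by apply: Rintegral_ge0 => t _; apply: sumr_ge0 => e _; rewrite mulr_ge0.
exact: (solution_dissipation (continuous_der dV') sol1 sol2 (ltW aV0)
  (der_mvt_bounded dV' V''_bnd) (der_odd_of_even dV evenV) uD (ltW ST)).
Qed.
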